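(* Let $a\ge b\ge2$ be integers, $\beta>1$ the positive root of $\beta^2=a\beta+b$, and $\beta'=a-\beta$. Then for each $n\in\mathbb N$, \[ \inf_{j\in\mathbb Z}P_{\mathbf h(j)}(\beta')\in\Big\{\mu_n+(\beta')^n\tfrac{b-1}{1-(\beta')^2}\,t:\ t\in[\beta',1]\Big\}, \qquad \mu_n=\min_{j\in\{0,1,\dots,b^n-1\}}P_{\mathrm{Pref}_n(\mathbf h(j))}(\beta'). \]
   Context: For an algebraic integer $\beta$, the $\beta$-adic expansion of $x\in\mathbb Z[\beta]$ is the unique infinite word $\mathbf h(x)=u_0u_1u_2\cdots$ with $u_n\in\{0,1,\dots,|N(\beta)|-1\}$ such that $x-\sum_{i=0}^{n-1}u_i\beta^i\in\beta^n\mathbb Z[\beta]$ for all $n\in\mathbb N$; here $|N(\beta)|=b$. $\mathrm{Pref}_n(\mathbf u)$ denotes the prefix of length $n$ of an infinite word $\mathbf u$. For a finite word $w=w_0\cdots w_{k-1}$, $P_w(X)=\sum_{i=0}^{k-1}w_iX^i$; for an infinite word $\mathbf u$, $P_{\mathbf u}(X)=\sum_{i\ge0}u_iX^i$. *)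

From Stdlib Require Import Reals ZArith Arith List ClassicalEpsilon.
Import ListNotations.
Open Scope R_scope.

Fixpoint psum (u : nat -> nat) (n : nat) (x : R) : R :=
  match n with
  | O => 0
  | S k => psum u k x + INR (u k) * x ^ k
  end.

Fixpoint zpoly_eval (l : list Z) (x : R) : R :=
  match l with
  | [] => 0
  | c :: l' => IZR c + x * zpoly_eval l' x
  end.

Definition in_Zbeta (beta y : R) : Prop := exists l : list Z, y = zpoly_eval l beta.

(* u is a beta-adic expansion of x (digits in {0,...,b-1}, b = |N(beta)|) *)
Definition is_expansion (beta : R) (b : nat) (x : R) (u : nat -> nat) : Prop :=
  (forall n, (u n < b)%nat) /\
  (forall n, exists z, in_Zbeta beta z /\ x - psum u n beta = beta ^ n * z).

(* h(x): the (unique) beta-adic expansion of x *)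
Definition h (beta : R) (b : nat) (x : R) : nat -> nat :=
  epsilon (inhabits (fun _ => 0%nat)) (is_expansion beta b x).

Definition mu (beta : R) (b n : nat) (x : R) : R :=
  fold_right Rmin (psum (h beta b 0) n x)
    (map (fun j => psum (h beta b (INR j)) n x) (seq 0 (Nat.pow b n))).

Definition is_inf (E : R -> Prop) (m : R) : Prop :=
  (forall y, E y -> m <= y) /\
  (forall m', (forall y, E y -> m' <= y) -> m' <= m).

From Stdlib Require Import Reals ZArith Arith List Lra Lia ClassicalEpsilon.
Import ListNotations.
Open Scope R_scope.

(* Put [x = a - beta]; then [-1 < x < 0] and [beta x = -b].  With digits in [{0, ..., b - 1}],
   every partial sum of [sum d_i x^i] lies in [[c x, c]], [c = (b - 1) / (1 - x^2)], so a series
   value differs from the value of its length-[n] prefix by an element of [x^n c [x, 1]].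
   As [b ^ n = beta ^ n (beta - a) ^ n], the integers [j] and [j mod b ^ n] are congruent modulo
   [beta ^ n] in [Z[beta]]; expansions are unique because [beta] is irrational, so [h(j)] shares
   its length-[n] prefix with some [h(j')], [0 <= j' < b ^ n].  Thus every value lies above the
   lower end of [mu_n + x^n c [x, 1]], and the prefix realising [mu_n] yields a value below its
   upper end. *)

Lemma psum_ext u v n x : (forall i, (i < n)%nat -> u i = v i) -> psum u n x = psum v n x.
Proof.
  induction n as [|n IH]; intros Huv; [reflexivity|]. simpl.
  rewrite IH by (intros i Hi; apply Huv; lia). rewrite (Huv n) by lia. reflexivity.
Qed.

Lemma psum_add u n k x :
  psum u (n + k) x = psum u n x + x ^ n * psum (fun i => u (n + i)%nat) k x.
Proof.
  induction k as [|k IH]; simpl; [rewrite Nat.add_0_r; ring|].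
  rewrite Nat.add_succ_r. simpl. rewrite IH, pow_add. ring.
Qed.

Lemma psum_S_shift u n x : psum u (S n) x = INR (u O) + x * psum (fun i => u (S i)) n x.
Proof. change (S n) with (1 + n)%nat. rewrite psum_add. simpl. ring. Qed.

Lemma fold_right_Rmin_le (d : R) (l : list R) z : In z l -> fold_right Rmin d l <= z.
Proof.
  induction l as [|c l IH]; [intros []|]. intros [<- | Hz]; simpl; [apply Rmin_l|].
  eapply Rle_trans; [apply Rmin_r | apply IH, Hz].
Qed.

Lemma fold_right_Rmin_in (d : R) (l : list R) :
  fold_right Rmin d l = d \/ In (fold_right Rmin d l) l.
Proof.
  induction l as [|c l IH]; [left; reflexivity|]. simpl.
  destruct (Rle_dec c (fold_right Rmin d l)) as [Hc|Hc].
  - rewrite Rmin_left by exact Hc. right; left; reflexivity.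
  - rewrite Rmin_right by lra. destruct IH as [E|E]; [left | right; right]; exact E.
Qed.

Lemma mu_attained beta b n x : exists j : Z, mu beta b n x = psum (h beta b (IZR j)) n x.
Proof.
  unfold mu. destruct (fold_right_Rmin_in (psum (h beta b 0) n x)
    (map (fun j => psum (h beta b (INR j)) n x) (seq 0 (b ^ n)))) as [E|E].
  - exists 0%Z. exact E.
  - apply in_map_iff in E. destruct E as [j [E _]]. exists (Z.of_nat j).
    rewrite <- INR_IZR_INZ. symmetry. exact E.
Qed.

Section QuadraticInteger.

Variables (a b : nat) (beta : R).
Hypothesis hroot : beta ^ 2 = INR a * beta + INR b.

(* As [beta] is quadratic, [Z[beta] = Z + Z beta]; this form is easier to compute with than
   [in_Zbeta]. *)
Definition Zlin (y : R) : Prop := exists p q : Z, y = IZR p + IZR q * beta.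

Lemma Zlin_IZR (k : Z) : Zlin (IZR k).
Proof. exists k, 0%Z. ring. Qed.

Lemma Zlin_INR (k : nat) : Zlin (INR k).
Proof. rewrite INR_IZR_INZ. apply Zlin_IZR. Qed.

Lemma Zlin_beta : Zlin beta.
Proof. exists 0%Z, 1%Z. ring. Qed.

Lemma Zlin_add y z : Zlin y -> Zlin z -> Zlin (y + z).
Proof. intros [p [q ->]] [r [s ->]]. exists (p + r)%Z, (q + s)%Z. rewrite !plus_IZR. ring. Qed.

Lemma Zlin_opp y : Zlin y -> Zlin (- y).
Proof. intros [p [q ->]]. exists (- p)%Z, (- q)%Z. rewrite !opp_IZR. ring. Qed.

Lemma Zlin_sub y z : Zlin y -> Zlin z -> Zlin (y - z).
Proof. intros Hy Hz. apply Zlin_add; [exact Hy | apply Zlin_opp, Hz]. Qed.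

Lemma Zlin_mul y z : Zlin y -> Zlin z -> Zlin (y * z).
Proof.
  intros [p [q ->]] [r [s ->]].
  exists (p * r + q * s * Z.of_nat b)%Z, (p * s + q * r + q * s * Z.of_nat a)%Z.
  rewrite !plus_IZR, !mult_IZR, <- !INR_IZR_INZ.
  transitivity (IZR p * IZR r + (IZR p * IZR s + IZR q * IZR r) * beta
                + IZR q * IZR s * beta ^ 2); [ring | rewrite hroot; ring].
Qed.

Lemma Zlin_pow y n : Zlin y -> Zlin (y ^ n).
Proof.
  intros Hy. induction n as [|n IH]; [apply (Zlin_IZR 1) | apply Zlin_mul; assumption].
Qed.

Lemma Zlin_psum u n : Zlin (psum u n beta).
Proof.
  induction n as [|n IH]; [apply (Zlin_IZR 0) |].
  apply Zlin_add; [exact IH |]. apply Zlin_mul; [apply Zlin_INR | apply Zlin_pow, Zlin_beta].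
Qed.

Lemma Zlin_of_in_Zbeta y : in_Zbeta beta y -> Zlin y.
Proof.
  intros [l ->]. induction l as [|c l IH]; [apply (Zlin_IZR 0) |].
  apply Zlin_add; [apply Zlin_IZR | apply Zlin_mul; [apply Zlin_beta | exact IH]].
Qed.

Lemma in_Zbeta_of_Zlin y : Zlin y -> in_Zbeta beta y.
Proof. intros [p [q ->]]. exists [p; q]. simpl. ring. Qed.

End QuadraticInteger.

Section BetaExpansions.

Variables (a b : nat) (beta : R).
Hypothesis hroot : beta ^ 2 = INR a * beta + INR b.
Hypothesis hfrac : INR a < beta < INR a + 1.
Hypothesis hb : (0 < b)%nat.

(* [(p, q)] stands for [p + q beta]: removing the digit [p mod b] leaves [b k + q beta] with
   [k = p / b], and [b / beta = beta - a]. *)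
Definition digit_step (pq : Z * Z) : Z * Z :=
  let k := (fst pq / Z.of_nat b)%Z in ((snd pq - Z.of_nat a * k)%Z, k).

Lemma expansion_exists y : Zlin beta y -> exists u, is_expansion beta b y u.
Proof.
  intros [p [q Hy]].
  set (rem n := Nat.iter n digit_step (p, q)).
  set (u n := Z.to_nat (fst (rem n) mod Z.of_nat b)).
  assert (Hu : forall n, Z.of_nat (u n) = (fst (rem n) mod Z.of_nat b)%Z).
  { intros n. unfold u. rewrite Z2Nat.id; [reflexivity|]. apply Z.mod_pos_bound. lia. }
  assert (Hinv : forall n, y - psum u n beta
                           = beta ^ n * (IZR (fst (rem n)) + IZR (snd (rem n)) * beta)).
  { induction n as [|n IH]; [simpl; rewrite Hy; ring|].
    change (rem (S n)) with (digit_step (rem n)).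
    destruct (rem n) as [p' q'] eqn:Er. unfold digit_step; simpl fst; simpl snd.
    assert (Hdiv : IZR p' = INR b * IZR (p' / Z.of_nat b) + INR (u n)).
    { rewrite !INR_IZR_INZ, Hu, Er, <- mult_IZR, <- plus_IZR. f_equal. apply Z.div_mod. lia. }
    simpl psum. rewrite minus_IZR, mult_IZR, <- INR_IZR_INZ.
    transitivity (y - psum u n beta - INR (u n) * beta ^ n); [ring|].
    simpl in IH. rewrite IH, Hdiv. simpl. simpl in hroot.
    replace (INR b) with (beta * beta - INR a * beta) by lra. ring. }
  exists u. split.
  - intros n. pose proof (Hu n). pose proof (Z.mod_pos_bound (fst (rem n)) (Z.of_nat b)). lia.
  - intros n. eexists. split; [|apply Hinv]. apply in_Zbeta_of_Zlin.
    exists (fst (rem n)), (snd (rem n)). reflexivity.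
Qed.

Lemma h_is_expansion y : Zlin beta y -> is_expansion beta b y (h beta b y).
Proof. intros Hy. unfold h. apply epsilon_spec, expansion_exists, Hy. Qed.


Lemma beta_mul_frac : beta * (beta - INR a) = INR b.
Proof. simpl in hroot. lra. Qed.

(* If [q beta = k], then [q (beta - a) = k - a q] is a smaller positive integer whose
   product with [beta] is the integer [q b]. *)
Lemma nat_mul_beta_not_IZR (q : nat) : (0 < q)%nat -> forall k : Z, INR q * beta <> IZR k.
Proof.
  induction q as [q IH] using lt_wf_ind. intros Hq k Hk.
  set (m := (k - Z.of_nat a * Z.of_nat q)%Z).
  assert (Hm : IZR m = INR q * (beta - INR a)).
  { unfold m. rewrite minus_IZR, mult_IZR, <- !INR_IZR_INZ. lra. }
  assert (Hq0 : 0 < INR q) by (apply lt_0_INR; exact Hq).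
  assert (Hm0 : (0 < m)%Z) by (apply lt_IZR; rewrite Hm; nra).
  assert (Hmq : (m < Z.of_nat q)%Z) by (apply lt_IZR; rewrite Hm, <- INR_IZR_INZ; nra).
  apply (IH (Z.to_nat m) ltac:(lia) ltac:(lia) (Z.of_nat (q * b))).
  rewrite INR_IZR_INZ, Z2Nat.id by lia. rewrite Hm, <- INR_IZR_INZ, mult_INR, <- beta_mul_frac.
  ring.
Qed.

Lemma Zlin_eq0 (p q : Z) : IZR p + IZR q * beta = 0 -> q = 0%Z.
Proof.
  intros Hpq. destruct (Z.lt_trichotomy q 0) as [Hq | [Hq | Hq]]; [exfalso | exact Hq | exfalso].
  - apply (nat_mul_beta_not_IZR (Z.to_nat (- q)) ltac:(lia) p).
    rewrite INR_IZR_INZ, Z2Nat.id, opp_IZR by lia. lra.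
  - apply (nat_mul_beta_not_IZR (Z.to_nat q) ltac:(lia) (- p)).
    rewrite INR_IZR_INZ, Z2Nat.id, opp_IZR by lia. lra.
Qed.

Lemma dvd_of_IZR_eq_beta_mul (k : Z) (z : R) :
  Zlin beta z -> IZR k = beta * z -> (Z.of_nat b | k)%Z.
Proof.
  intros [p [q ->]] Hk.
  assert (Hlin : IZR (k - q * Z.of_nat b) + IZR (- (p + q * Z.of_nat a)) * beta = 0).
  { rewrite minus_IZR, opp_IZR, plus_IZR, !mult_IZR, <- !INR_IZR_INZ, Hk. simpl in hroot. nra. }
  pose proof (Zlin_eq0 _ _ Hlin) as Hq.
  rewrite Hq, Rmult_0_l, Rplus_0_r in Hlin. apply eq_IZR_R0 in Hlin.
  exists q. lia.
Qed.

Lemma expansion_prefix_unique n u v w :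
  (forall i, (u i < b)%nat) -> (forall i, (v i < b)%nat) -> Zlin beta w ->
  psum u n beta - psum v n beta = beta ^ n * w -> forall i, (i < n)%nat -> u i = v i.
Proof.
  revert u v w. induction n as [|n IH]; intros u v w Hu Hv Hw Huv i Hi; [lia|].
  rewrite !psum_S_shift in Huv.
  set (du := psum (fun i => u (S i)) n beta) in Huv.
  set (dv := psum (fun i => v (S i)) n beta) in Huv.
  assert (Hdvd : (Z.of_nat b | Z.of_nat (u O) - Z.of_nat (v O))%Z).
  { apply (dvd_of_IZR_eq_beta_mul _ (beta ^ n * w - (du - dv))).
    - apply Zlin_sub; [apply (Zlin_mul a b); auto; apply (Zlin_pow a b), Zlin_beta; auto |].
      apply Zlin_sub; apply (Zlin_psum a b); auto.
    - rewrite minus_IZR, <- !INR_IZR_INZ. simpl in Huv. lra. }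
  assert (H0 : u O = v O).
  { destruct Hdvd as [m Hm]. pose proof (Hu O). pose proof (Hv O).
    assert (m = 0%Z) by nia. lia. }
  destruct i as [|i]; [exact H0|].
  apply (IH (fun i => u (S i)) (fun i => v (S i)) w); auto; [|lia].
  apply (Rmult_eq_reg_l beta); [|pose proof (pos_INR a); lra].
  rewrite H0 in Huv. simpl in Huv. fold du dv. lra.
Qed.

Lemma h_digit_lt (j : Z) i : (h beta b (IZR j) i < b)%nat.
Proof. apply h_is_expansion, Zlin_IZR. Qed.

(* [b ^ n = beta ^ n (beta - a) ^ n] lies in [beta ^ n Z[beta]]. *)
Lemma h_prefix_mod (n : nat) (j : Z) i : (i < n)%nat ->
  h beta b (IZR j) i = h beta b (IZR (j mod Z.of_nat (b ^ n))) i.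
Proof.
  set (m := Z.of_nat (b ^ n)). set (j' := (j mod m)%Z).
  assert (Hm : IZR m = beta ^ n * (beta - INR a) ^ n).
  { unfold m. rewrite <- INR_IZR_INZ, pow_INR, <- Rpow_mult_distr, beta_mul_frac. reflexivity. }
  assert (Hj : IZR j = IZR j' + IZR m * IZR (j / m)).
  { rewrite <- mult_IZR, <- plus_IZR. f_equal.
    assert (m <> 0%Z) by (pose proof (Nat.pow_nonzero b n); unfold m; lia).
    pose proof (Z.div_mod j m). unfold j'. lia. }
  destruct (h_is_expansion (IZR j) (Zlin_IZR _ j)) as [Hu Hzu].
  destruct (h_is_expansion (IZR j') (Zlin_IZR _ j')) as [Hv Hzv].
  destruct (Hzu n) as [zu [Izu Ezu]]. destruct (Hzv n) as [zv [Izv Ezv]].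
  apply (expansion_prefix_unique n _ _ ((beta - INR a) ^ n * IZR (j / m) - zu + zv)); auto.
  - apply Zlin_add; [apply Zlin_sub | apply (Zlin_of_in_Zbeta a b); auto].
    + apply (Zlin_mul a b); auto; [apply (Zlin_pow a b); auto | apply Zlin_IZR].
      apply Zlin_sub; [apply Zlin_beta | apply Zlin_INR].
    + apply (Zlin_of_in_Zbeta a b); auto.
  - rewrite Hm in Hj. lra.
Qed.

Lemma mu_le_psum_h n x (j : Z) :
  mu beta b n x <= psum (h beta b (IZR j)) n x.
Proof.
  set (m := Z.of_nat (b ^ n)).
  assert (Hm : (0 < m)%Z) by (pose proof (Nat.pow_nonzero b n); unfold m; lia).
  pose proof (Z.mod_pos_bound j m Hm) as Hjm.
  rewrite (psum_ext _ (h beta b (INR (Z.to_nat (j mod m)))));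
    [| intros i Hi; rewrite INR_IZR_INZ, Z2Nat.id by lia; apply h_prefix_mod; assumption].
  apply fold_right_Rmin_le, in_map_iff. eexists; split; [reflexivity|].
  apply in_seq. unfold m in *. lia.
Qed.

End BetaExpansions.

Lemma sum_f_R0_psum u x N : sum_f_R0 (fun i => INR (u i) * x ^ i) N = psum u (S N) x.
Proof. induction N as [|N IH]; simpl; [ring | rewrite IH; reflexivity]. Qed.

Lemma infinite_sum_between (s : nat -> R) y lo hi n0 :
  infinite_sum s y -> (forall N, (n0 <= N)%nat -> lo <= sum_f_R0 s N <= hi) -> lo <= y <= hi.
Proof.
  intros Hs Hb.
  assert (Hnear : forall eps, 0 < eps ->
            exists N, lo <= sum_f_R0 s N <= hi /\ Rabs (sum_f_R0 s N - y) < eps).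
  { intros eps Heps. destruct (Hs eps Heps) as [N HN].
    exists (Nat.max N n0). split; [apply Hb; lia | apply HN; lia]. }
  split; apply Rnot_lt_le; intros Hlt.
  - destruct (Hnear (lo - y)) as [N [HN HNy]]; [lra|]. apply Rabs_def2 in HNy. lra.
  - destruct (Hnear (y - hi)) as [N [HN HNy]]; [lra|]. apply Rabs_def2 in HNy. lra.
Qed.

(* The extreme values of [sum d_i x^i] for [-1 < x < 0] and digits in [{0, ..., b - 1}]:
   all digits [b - 1] on the even powers give [c], on the odd powers [c x]. *)
Definition max_digit_series (b : nat) (x : R) : R := (INR b - 1) / (1 - x ^ 2).

Section DigitSeries.

Variables (b : nat) (x : R).
Hypothesis hx : -1 < x < 0.
Hypothesis hb : (1 <= b)%nat.

Lemma max_digit_series_nonneg : 0 <= max_digit_series b x.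
Proof.
  assert (1 <= INR b) by (apply (le_INR 1); exact hb).
  unfold max_digit_series. apply Rmult_le_pos; [lra|].
  apply Rlt_le, Rinv_0_lt_compat. simpl. nra.
Qed.

Lemma psum_digits_bounds d N : (forall i, (d i < b)%nat) ->
  max_digit_series b x * x <= psum d N x <= max_digit_series b x.
Proof.
  pose proof max_digit_series_nonneg as Hc.
  assert (Hfix : max_digit_series b x * (1 - x ^ 2) = INR b - 1).
  { unfold max_digit_series. field. simpl. nra. }
  revert d. induction N as [|N IH]; intros d Hd; [simpl; nra|].
  rewrite psum_S_shift. destruct (IH (fun i => d (S i))) as [Hlo Hhi]; [intros; apply Hd|].
  assert (Hd0 : INR (d O) + 1 <= INR b) by (rewrite <- S_INR; apply le_INR, Hd).
  pose proof (pos_INR (d O)). simpl in Hfix. split; nra.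
Qed.

Lemma digit_series_converges u : (forall i, (u i < b)%nat) ->
  exists y, infinite_sum (fun i => INR (u i) * x ^ i) y.
Proof.
  intros Hu. pose proof max_digit_series_nonneg as Hc. set (c := max_digit_series b x) in *.
  assert (Htail : forall N k, Rabs (psum u (N + k) x - psum u N x) <= Rabs (x ^ N) * c).
  { intros N k. rewrite psum_add.
    replace (_ + _ - _) with (x ^ N * psum (fun i => u (N + i)%nat) k x) by ring.
    rewrite Rabs_mult. apply Rmult_le_compat_l; [apply Rabs_pos|].
    destruct (psum_digits_bounds (fun i => u (N + i)%nat) k) as [Hlo Hhi]; [intros; apply Hu|].
    apply Rabs_le. fold c in Hlo, Hhi. nra. }
  assert (HC : Cauchy_crit (fun N => sum_f_R0 (fun i => INR (u i) * x ^ i) N)).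
  { intros eps Heps.
    destruct (pow_lt_1_zero x ltac:(apply Rabs_def1; lra) (eps / (2 * (c + 1)))) as [N HN].
    { apply Rdiv_lt_0_compat; lra. }
    assert (Hsmall : Rabs (x ^ N) * c < eps / 2).
    { apply Rle_lt_trans with (eps / (2 * (c + 1)) * c).
      - apply Rmult_le_compat_r, Rlt_le, HN; [exact Hc | lia].
      - apply Rmult_lt_reg_r with (2 * (c + 1)); [lra|].
        replace (eps / (2 * (c + 1)) * c * (2 * (c + 1))) with (eps * c) by (field; lra).
        nra. }
    exists N. intros m k Hm Hk. unfold Rdist. rewrite !sum_f_R0_psum.
    pose proof (Htail N (S m - N)%nat) as Htm. pose proof (Htail N (S k - N)%nat) as Htk.
    replace (N + (S m - N))%nat with (S m) in Htm by lia.
    replace (N + (S k - N))%nat with (S k) in Htk by lia.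
    revert Htm Htk. split_Rabs; lra. }
  destruct (R_complete _ HC) as [y Hy]. exists y. exact Hy.
Qed.

Lemma digit_series_bounds u y n : (forall i, (u i < b)%nat) ->
  infinite_sum (fun i => INR (u i) * x ^ i) y ->
  let K := x ^ n * max_digit_series b x in
  psum u n x + Rmin (K * x) K <= y <= psum u n x + Rmax (K * x) K.
Proof.
  intros Hu Hy K. apply (infinite_sum_between _ _ _ _ n Hy). intros N HN.
  rewrite sum_f_R0_psum. replace (S N) with (n + (S N - n))%nat by lia. rewrite psum_add.
  destruct (psum_digits_bounds (fun i => u (n + i)%nat) (S N - n)) as [Hlo Hhi];
    [intros; apply Hu|].
  set (T := psum (fun i => u (n + i)%nat) (S N - n) x) in *.
  unfold K, Rmin, Rmax. destruct (Rle_dec _ _); destruct (Rle_dec 0 (x ^ n)); split; nra.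
Qed.

End DigitSeries.

Lemma is_inf_exists (E : R -> Prop) :
  (exists y, E y) -> (exists l, forall y, E y -> l <= y) -> exists m, is_inf E m.
Proof.
  intros [y Hy] [l Hl].
  destruct (completeness (fun z => E (- z))) as [s [Hub Hleast]].
  - exists (- l). intros z Hz. apply Hl in Hz. lra.
  - exists (- y). rewrite Ropp_involutive. exact Hy.
  - exists (- s). split.
    + intros z Hz. assert (- z <= s) by (apply Hub; rewrite Ropp_involutive; exact Hz). lra.
    + intros m Hm. assert (s <= - m); [|lra].
      apply Hleast. intros z Hz. apply Hm in Hz. lra.
Qed.

Lemma between_Rmin_Rmax_scaled (M K x s : R) : K <> 0 -> x <= 1 ->
  M + Rmin (K * x) K <= s <= M + Rmax (K * x) K -> exists t, x <= t <= 1 /\ s = M + K * t.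
Proof.
  intros HK Hx Hs. set (t := (s - M) / K).
  assert (Ht : s = M + K * t) by (unfold t; field; exact HK).
  exists t. split; [|exact Ht]. rewrite Ht in Hs.
  destruct (Rlt_or_le 0 K) as [HKp | HKn].
  - rewrite Rmin_left, Rmax_right in Hs by nra. split; nra.
  - assert (K < 0) by lra. rewrite Rmin_right, Rmax_left in Hs by nra. split; nra.
Qed.

Lemma max_digit_series_pos b x : (2 <= b)%nat -> -1 < x < 1 -> 0 < max_digit_series b x.
Proof.
  intros Hb Hx. assert (2 <= INR b) by (apply (le_INR 2); exact Hb).
  unfold max_digit_series. apply Rdiv_lt_0_compat; [lra|]. simpl. nra.
Qed.

Lemma beta_frac_bounds a b beta : (1 <= b)%nat -> (b <= a)%nat -> 0 < beta ->
  beta ^ 2 = INR a * beta + INR b -> INR a < beta < INR a + 1.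
Proof.
  intros Hb Hab Hbeta Hroot.
  assert (1 <= INR b) by (apply (le_INR 1); exact Hb).
  assert (INR b <= INR a) by (apply le_INR; exact Hab).
  simpl in Hroot. split; nra.
Qed.

Theorem proposition4 (a b : nat) (beta : R)
  (hb : (2 <= b)%nat) (hab : (b <= a)%nat)
  (hbeta : 1 < beta) (hroot : beta ^ 2 = INR a * beta + INR b)
  (n : nat) :
  exists t : R, INR a - beta <= t <= 1 /\
    is_inf (fun y => exists j : Z,
               infinite_sum (fun i => INR (h beta b (IZR j) i) * (INR a - beta) ^ i) y)
           (mu beta b n (INR a - beta)
            + (INR a - beta) ^ n * ((INR b - 1) / (1 - (INR a - beta) ^ 2)) * t).
Proof.
  assert (hb1 : (1 <= b)%nat) by lia.
  assert (hfrac := beta_frac_bounds a b beta hb1 hab ltac:(lra) hroot).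
  pose proof (h_digit_lt a b beta hroot ltac:(lia)) as hdigit.
  set (x := INR a - beta). assert (hx : -1 < x < 0) by (unfold x; lra).
  change ((INR b - 1) / (1 - x ^ 2)) with (max_digit_series b x).
  set (K := x ^ n * max_digit_series b x). set (M := mu beta b n x).
  assert (HK : K <> 0).
  { apply Rmult_integral_contrapositive. split; [apply pow_nonzero; lra|].
    apply Rgt_not_eq, max_digit_series_pos; [exact hb | lra]. }
  set (E := fun y => exists j : Z, infinite_sum (fun i => INR (h beta b (IZR j) i) * x ^ i) y).
  assert (Hlow : forall y, E y -> M + Rmin (K * x) K <= y).
  { intros y [j Hy].
    destruct (digit_series_bounds b x hx hb1 _ y n (hdigit j) Hy) as [Hy_low _].
    pose proof (mu_le_psum_h a b beta hroot hfrac ltac:(lia) n x j) as Hmu.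
    fold K in Hy_low. fold M in Hmu. lra. }
  destruct (mu_attained beta b n x) as [j0 Hj0].
  destruct (digit_series_converges b x hx hb1 _ (hdigit j0)) as [y0 Hy0].
  assert (Hy0E : E y0) by (exists j0; exact Hy0).
  destruct (is_inf_exists E) as [s Hs]; [exists y0; exact Hy0E | eexists; exact Hlow |].
  assert (Hs_up : s <= M + Rmax (K * x) K).
  { destruct (digit_series_bounds b x hx hb1 _ y0 n (hdigit j0) Hy0) as [_ Hy0_up].
    fold K in Hy0_up. rewrite <- Hj0 in Hy0_up. fold M in Hy0_up. apply Hs in Hy0E. lra. }
  destruct (between_Rmin_Rmax_scaled M K x s HK) as [t [Ht ->]];
    [lra | split; [apply Hs, Hlow | exact Hs_up] |].
  exists t. split; [exact Ht | exact Hs].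
Qed.
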